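(* Let $\operatorname{P}\in\operatorname{MM}(A,\theta,S)$, $E\subset\mathbb{Y}$, and let $\theta_i$ with $i\in S_j$ be varied to $\tilde\theta_i$. If $0\le |A_{y,S_j}|\le 1$ for all $y\in E$, then for any linear $\tilde\theta_i$-covariation scheme $\sigma$ the sensitivity function $\sigma(\operatorname{P})(E)$ is a linear (affine) function of $\tilde\theta_i$.
   Context: Let $\mathbb{Y}$ be a finite set with $q$ elements. A monomial model $\operatorname{MM}(A,\theta,S)$ is given by $A\in\mathcal{M}_{q\times k}(\mathbb{Z}_{\ge0})$ with rows $A_y$, parameters $\theta\in\mathbb{R}^k_{>0}$, and a partition $S=\{S_1,\dots,S_n\}$ of $[k]$ with each block $(\theta_l)_{l\in S_m}$ in the open probability simplex; $\operatorname{P}(y)=\prod_l\theta_l^{A_{y,l}}$, a probability distribution for every such parameter; $\operatorname{P}(E)=\sum_{y\in E}\operatorname{P}(y)$; $|A_{y,S_j}|=\sum_{l\in S_j}A_{y,l}$; $S_j^{-i}=S_j\setminus\{i\}$. A linear $\tilde\theta_i$-covariation scheme $\sigma$ sets $\theta_i$ to $\tilde\theta_i\in(0,1)$, sets $\tilde\theta_k=\gamma_k\tilde\theta_i+\delta_k$ for $k\in S_j^{-i}$ with constants chosen so the block $S_j$ sums to one, and leaves $\theta_l$, $l\notin S_j$, unchanged; $\sigma(\operatorname{P})(y)=\tilde\theta^{A_y}$ (proportional and uniform covariation are special cases). *)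

From HB Require Import structures.
From mathcomp Require Import all_boot all_order all_algebra.
Set Implicit Arguments. Unset Strict Implicit. Unset Printing Implicit Defensive.
Import Order.TTheory GRing.Theory Num.Theory.
Local Open Scope ring_scope.

Definition mono_prob (R : realFieldType) (Y : finType) (k : nat)
  (A : Y -> 'I_k -> nat) (theta : 'I_k -> R) (y : Y) : R :=
  \prod_(l < k) theta l ^+ A y l.

Definition mono_probE (R : realFieldType) (Y : finType) (k : nat)
  (A : Y -> 'I_k -> nat) (theta : 'I_k -> R) (E : {set Y}) : R :=
  \sum_(y in E) mono_prob A theta y.

Definition valid_param (R : realFieldType) (k : nat)
  (S : {set {set 'I_k}}) (theta : 'I_k -> R) : Prop :=
  (forall l, 0 < theta l) /\ (forall B, B \in S -> \sum_(l in B) theta l = 1).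

Definition monomial_model (R : realFieldType) (Y : finType) (k : nat)
  (A : Y -> 'I_k -> nat) (theta : 'I_k -> R) (S : {set {set 'I_k}}) : Prop :=
  partition S [set: 'I_k] /\ valid_param S theta /\
  (forall theta' : 'I_k -> R, valid_param S theta' -> \sum_(y : Y) mono_prob A theta' y = 1).

Definition lin_cov (R : realFieldType) (k : nat) (theta : 'I_k -> R)
  (Sj : {set 'I_k}) (i : 'I_k) (gamma delta : 'I_k -> R) (t : R) : 'I_k -> R :=
  fun l => if l == i then t else if l \in Sj then gamma l * t + delta l else theta l.

Definition lin_cov_scheme (R : realFieldType) (k : nat) (theta : 'I_k -> R)
  (Sj : {set 'I_k}) (i : 'I_k) (gamma delta : 'I_k -> R) : Prop :=
  forall t : R, 0 < t < 1 -> \sum_(l in Sj) lin_cov theta Sj i gamma delta t l = 1.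

(* In a monomial the parameters of the block S_j appear with total degree
   |A_{y,S_j}| <= 1, so each term P(y) of P(E) is either independent of the
   block or a constant multiple of a single block parameter.  Under a linear
   covariation every block parameter is an affine function of the new value
   of theta_i, hence so is each term, and so is their sum. *)
From mathcomp Require Import all_boot all_order all_algebra.
From mathcomp Require Import ring.
Set Implicit Arguments. Unset Strict Implicit. Unset Printing Implicit Defensive.
Import Order.TTheory GRing.Theory Num.Theory.
Local Open Scope ring_scope.

Definition affine {R : comPzRingType} (f : R -> R) : Prop :=
  exists a b : R, forall t, f t = a * t + b.

Section Affine.
Variable R : comPzRingType.
Implicit Types f g : R -> R.

Lemma eq_affine {f g} : f =1 g -> affine f <-> affine g.
Proof. by move=> fg; split=> -[a [b fE]]; exists a, b => t; rewrite -?fg // fg. Qed.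

Lemma affine_cst (c : R) : affine (fun=> c).
Proof. by exists 0, c => t; rewrite mul0r add0r. Qed.

Lemma affineD f g : affine f -> affine g -> affine (fun t => f t + g t).
Proof.
move=> [a [b fE]] [c [d gE]]; exists (a + c), (b + d) => t.
by rewrite fE gE; ring.
Qed.

Lemma affineMr f (c : R) : affine f -> affine (fun t => f t * c).
Proof. by move=> [a [b fE]]; exists (a * c), (b * c) => t; rewrite fE; ring. Qed.

Lemma affine_sum (I : Type) (r : seq I) (P : pred I) (F : I -> R -> R) :
  (forall i, P i -> affine (F i)) -> affine (fun t => \sum_(i <- r | P i) F i t).
Proof.
move=> FA; elim: r => [|x r IHr].
  by apply/(eq_affine (g := fun=> 0)) => [t|]; [rewrite big_nil | exact: affine_cst].
set sum_r := fun t => \sum_(i <- r | P i) F i t.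
have consE t : \sum_(i <- x :: r | P i) F i t =
               if P x then F x t + sum_r t else sum_r t by rewrite big_cons.
apply/(eq_affine consE); case Px: (P x) => //.
exact: affineD (FA x Px) IHr.
Qed.

Lemma affine_prod_exp_le1 (I : finType) (B : {pred I}) (F : I -> R -> R)
    (n : I -> nat) :
  (forall l, l \in B -> affine (F l)) -> (\sum_(l in B) n l <= 1)%N ->
  affine (fun t => \prod_(l in B) F l t ^+ n l).
Proof.
move=> FA n_le1; case: (pickP [pred l | (l \in B) && (n l != 0%N)]) => /=.
- move=> l0 /andP[l0B nl0]; rewrite (bigD1 l0) //= in n_le1.
  have n1 : n l0 = 1%N by move: nl0 n_le1; case: (n l0) => [|[|]].
  move: n_le1; rewrite n1 ltnS leqn0 sum_nat_eq0 => /forall_inP n0.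
  have prodE t : \prod_(l in B) F l t ^+ n l = F l0 t.
    rewrite (bigD1 l0) //= n1 expr1 big1 ?mulr1 // => l lB.
    by rewrite (eqP (n0 l lB)) expr0.
  by apply/(eq_affine prodE); exact: FA.
- move=> n0; apply/(eq_affine (g := fun=> 1)) => [t|]; last exact: affine_cst.
  rewrite big1 // => l lB.
  by move: (n0 l) => /=; rewrite lB /= => /negbFE/eqP->; rewrite expr0.
Qed.

End Affine.

Section LinearCovariation.
Variables (R : realFieldType) (k : nat) (theta : 'I_k -> R) (Sj : {set 'I_k}).
Variables (i : 'I_k) (gamma delta : 'I_k -> R).
Hypothesis iSj : i \in Sj.

Local Notation cov := (lin_cov theta Sj i gamma delta).

Lemma lin_cov_affine l : affine (fun t => cov t l).
Proof.
rewrite /lin_cov; case: (l == i); first by exists 1, 0 => t; ring.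
case: (l \in Sj); first by exists (gamma l), (delta l).
exact: affine_cst.
Qed.

Lemma lin_cov_out l t : l \notin Sj -> cov t l = theta l.
Proof.
move=> lSj; rewrite /lin_cov (negbTE lSj).
by case: eqP => // li; rewrite li iSj in lSj.
Qed.

Lemma mono_prob_lin_cov (Y : finType) (A : Y -> 'I_k -> nat) y t :
  mono_prob A (cov t) y =
  (\prod_(l in Sj) cov t l ^+ A y l) * \prod_(l < k | l \notin Sj) theta l ^+ A y l.
Proof.
rewrite /mono_prob (bigID (mem Sj)) /=; congr (_ * _).
by apply: eq_bigr => l lSj; rewrite lin_cov_out.
Qed.

End LinearCovariation.

Theorem corollary2 (R : realFieldType) (Y : finType) (k : nat)
  (A : Y -> 'I_k -> nat) (theta : 'I_k -> R) (S : {set {set 'I_k}})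
  (E : {set Y}) (Sj : {set 'I_k}) (i : 'I_k) (gamma delta : 'I_k -> R) :
  monomial_model A theta S ->
  Sj \in S -> i \in Sj ->
  (forall y, y \in E -> (\sum_(l in Sj) A y l <= 1)%N) ->
  lin_cov_scheme theta Sj i gamma delta ->
  exists a b : R, forall t : R, 0 < t < 1 ->
    mono_probE A (lin_cov theta Sj i gamma delta t) E = a * t + b.
Proof.
move=> _ _ iSj A_le1 _.
have [a [b probE]] : affine (fun t => mono_probE A (lin_cov theta Sj i gamma delta t) E).
  apply: affine_sum => y yE.
  apply/(eq_affine (mono_prob_lin_cov theta gamma delta iSj A y)).
  apply: affineMr; apply: affine_prod_exp_le1 (A_le1 y yE) => l _.
  exact: lin_cov_affine.
by exists a, b => t _.
Qed.
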